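(* Let $\Gamma=(V,E)$ be a reflexive locally finite $2$-faithful degenerate graph and let $X$ and $Y$ be $2$-atoms of $\Gamma$. Then $$|\partial(X\cap Y)|\le|\Gamma(X)\cap\Gamma(Y)|-|X\cap Y|\le\kappa_2(\Gamma),$$ and $$|\nabla(X)\setminus\nabla(Y)|\le|Y\setminus X|+\kappa_2(\Gamma)-|\partial(X\cap Y)|.$$
   Context: A graph is a pair $\Gamma=(V,E)$ with $E\subseteq V\times V$; reflexive means $(x,x)\in E$ for all $x$; $\Gamma(x)=\{y:(x,y)\in E\}$, $\Gamma(X)=\bigcup_{x\in X}\Gamma(x)$; the reverse graph is $\Gamma^-=(V,E^-)$, $E^-=\{(x,y):(y,x)\in E\}$; locally finite means $\Gamma(x)$, $\Gamma^-(x)$ finite for all $x$. $\partial(X)=\Gamma(X)\setminus X$, $\nabla(X)=V\setminus\Gamma(X)$. $\Gamma$ is $k$-separable if there is a finite $X$ with $|X|\ge k$, $|\nabla(X)|\ge k$; then $\kappa_k(\Gamma)=\min\{|\partial(X)|: X\text{ finite},|X|\ge k,|\nabla(X)|\ge k\}$. A $k$-fragment is a finite $X$ with $|X|\ge k$, $|\nabla(X)|\ge k$, $|\partial(X)|=\kappa_k(\Gamma)$; a $k$-atom is a $k$-fragment of minimum cardinality. $\Gamma$ is $k$-faithful if $|A|\le|\nabla(A)|$ for a $k$-atom $A$. $\Gamma$ is degenerate if it is $2$-separable and $\kappa_2(\Gamma)=\kappa_1(\Gamma)$. *)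

From HB Require Import structures.
From mathcomp Require Import all_boot.
From mathcomp Require Import finmap.
From mathcomp Require Import boolp classical_sets cardinality.

Set Implicit Arguments.
Unset Strict Implicit.
Unset Printing Implicit Defensive.

Local Open Scope classical_set_scope.
Local Open Scope fset_scope.

Section GraphDefs.
Variable V : choiceType.
Variable E : V -> V -> Prop.

(* cardinality of a finite set (only meaningful for finite sets) *)
Definition vcard (A : set V) : nat := #|` fset_set A|.

(* |A| >= k, for an arbitrary (possibly infinite) set A *)
Definition atleast (k : nat) (A : set V) : Prop :=
  exists B : {fset V}, (forall x, x \in B -> A x) /\ (k <= #|` B|)%N.

Definition reflexiveG : Prop := forall x, E x x.

Definition nbr (X : set V) : set V := [set y | exists2 x, X x & E x y].
Definition innbr (x : V) : set V := [set y | E y x].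

Definition locally_finite : Prop :=
  forall x, finite_set (nbr [set x]) /\ finite_set (innbr x).

Definition bnd (X : set V) : set V := nbr X `\` X.
Definition nabla (X : set V) : set V := ~` nbr X.

Definition admissible (k : nat) (X : set V) : Prop :=
  finite_set X /\ (k <= vcard X)%N /\ atleast k (nabla X).

Definition separable (k : nat) : Prop := exists X, admissible k X.

Definition is_kappa (k n : nat) : Prop :=
  (exists2 X, admissible k X & vcard (bnd X) = n) /\
  (forall X, admissible k X -> (n <= vcard (bnd X))%N).

(* kappa_k(Gamma); well defined (the minimum exists) when Gamma is k-separable *)
Definition kappa (k : nat) : nat := xget 0%N [set n | is_kappa k n].

Definition fragment (k : nat) (X : set V) : Prop :=
  admissible k X /\ vcard (bnd X) = kappa k.

Definition atom (k : nat) (A : set V) : Prop :=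
  fragment k A /\ (forall B, fragment k B -> (vcard A <= vcard B)%N).

Definition faithful (k : nat) : Prop :=
  exists A, atom k A /\ atleast (vcard A) (nabla A).

Definition degenerate : Prop := separable 2 /\ kappa 2 = kappa 1.

End GraphDefs.

(* Write kappa for kappa_2 = kappa_1.  The first inequality holds because
   Gamma(X & Y) is contained in Gamma(X) & Gamma(Y).  For the second, if Gamma(X | Y)
   misses a vertex then X | Y is 1-admissible, so its boundary has at least
   kappa_1 = kappa elements, and inclusion-exclusion on Gamma(X) | Gamma(Y) = Gamma(X | Y)
   gives the bound.  Otherwise Gamma(X) | Gamma(Y) is the whole, hence finite, vertex set;
   counting it through a faithful atom A, which has the size of X and Y and satisfies
   |A| <= |nabla(A)|, even gives |Gamma(X) & Gamma(Y)| <= kappa.  The last inequality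
   follows from the first, as nabla(X) \ nabla(Y) = Gamma(Y) \ Gamma(X). *)
From HB Require Import structures.
From mathcomp Require Import all_boot.
From mathcomp Require Import finmap.
From mathcomp Require Import boolp classical_sets cardinality.
From mathcomp Require Import zify.

Set Implicit Arguments.
Unset Strict Implicit.
Unset Printing Implicit Defensive.

Local Open Scope classical_set_scope.

Section Cardinality.
Variable T : choiceType.
Implicit Types A B : set T.

Lemma vcard0 : vcard (set0 : set T) = 0%N.
Proof. by rewrite /vcard fset_set0. Qed.

Lemma vcardUI A B : finite_set A -> finite_set B ->
  (vcard (A `|` B) + vcard (A `&` B) = vcard A + vcard B)%N.
Proof. by move=> fA fB; rewrite /vcard fset_setU // fset_setI // cardfsUI. Qed.

Lemma vcardDI A B : finite_set A ->
  (vcard (A `\` B) + vcard (A `&` B) = vcard A)%N.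
Proof.
move=> fA; rewrite -vcardUI; [|exact: finite_setD|exact: finite_setIl].
rewrite setUC setUIDK.
have -> : (A `\` B) `&` (A `&` B) = set0 by rewrite setIACA setICl setI0.
by rewrite vcard0 addn0.
Qed.

Lemma vcard_setC A : finite_set [set: T] ->
  (vcard (~` A) + vcard A = vcard [set: T])%N.
Proof. by move=> fT; rewrite -(vcardDI A fT) setTD setTI. Qed.

Lemma vcard_le A B : A `<=` B -> finite_set B -> (vcard A <= vcard B)%N.
Proof.
move=> AB fB; have fA := sub_finite_set AB fB.
by rewrite /vcard; apply: fsubset_leq_card; rewrite -fset_set_sub.
Qed.

Lemma atleast_vcard k A : finite_set A -> atleast k A -> (k <= vcard A)%N.
Proof.
move=> fA [B [BA kB]]; apply: (leq_trans kB); rewrite /vcard.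
by apply: fsubset_leq_card; apply/fsubsetP => x xB; rewrite in_fset_set // inE; apply: BA.
Qed.

Lemma atleast_mono k l A : (k <= l)%N -> atleast l A -> atleast k A.
Proof. by move=> kl [B [BA lB]]; exists B; split=> //; apply: leq_trans lB. Qed.

Lemma atleast1 A : A !=set0 -> atleast 1 A.
Proof.
case=> a Aa; exists [fset a]%fset; split; last by rewrite cardfs1.
by move=> x; rewrite inE => /eqP ->.
Qed.

End Cardinality.

Section Graph.
Variables (V : choiceType) (E : V -> V -> Prop).
Hypotheses (hrefl : reflexiveG E) (hlf : locally_finite E).
Implicit Types X Y : set V.

Lemma nbrU X Y : nbr E (X `|` Y) = nbr E X `|` nbr E Y.
Proof.
apply/seteqP; split=> y /=.
  by case=> x [Xx|Yx] Exy; [left|right]; exists x.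
by case=> -[x Xx Exy]; exists x => //; [left|right].
Qed.

Lemma nbrI_sub X Y : nbr E (X `&` Y) `<=` nbr E X `&` nbr E Y.
Proof. by move=> y [x [Xx Yx] Exy]; split; exists x. Qed.

Lemma nablaD X Y : nabla E X `\` nabla E Y = nbr E Y `\` nbr E X.
Proof. by apply/seteqP; split=> x /= [h1 h2]; split=> //; apply: contrapT. Qed.

Lemma finite_nbr X : finite_set X -> finite_set (nbr E X).
Proof.
move=> fX.
have -> : nbr E X = \bigcup_(x in X) nbr E [set x].
  apply/seteqP; split=> y /=.
    by case=> x Xx Exy; exists x => //; exists x.
  by case=> x Xx [x' /= -> Exy]; exists x.
by apply: bigcup_finite => // x _; case: (hlf x).
Qed.

Lemma sub_nbr X : X `<=` nbr E X.
Proof. by move=> x Xx; exists x. Qed.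

Lemma vcard_nbr X : finite_set X ->
  vcard (nbr E X) = (vcard X + vcard (bnd E X))%N.
Proof.
move=> fX; rewrite -(vcardDI X (finite_nbr fX)) addnC /bnd.
by rewrite setIidr //; apply: sub_nbr.
Qed.

Lemma vcard_nbr_fragment k X : fragment E k X ->
  vcard (nbr E X) = (vcard X + kappa E k)%N.
Proof. by case=> -[fX _] bX; rewrite vcard_nbr // bX. Qed.

Lemma is_kappa_kappa k : separable E k -> is_kappa E k (kappa E k).
Proof.
move=> [X0 hX0].
pose P n := `[< exists2 X, admissible E k X & vcard (bnd E X) = n >].
have exP : exists n, P n by exists (vcard (bnd E X0)); apply/asboolP; exists X0.
have [m Pm minm] := ex_minnP exP.
apply: xgetPex; exists m; split; first by move/asboolP: Pm.
by move=> X hX; apply: minm; apply/asboolP; exists X.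
Qed.

Lemma kappa_le_bnd k X : separable E k -> admissible E k X ->
  (kappa E k <= vcard (bnd E X))%N.
Proof. by move=> sk; apply: (is_kappa_kappa sk).2. Qed.

Lemma separable_mono k l : (k <= l)%N -> separable E l -> separable E k.
Proof.
move=> kl [X [fX [lX nX]]]; exists X; split=> //; split.
  exact: leq_trans lX.
exact: atleast_mono nX.
Qed.

Lemma atom_vcard_eq k X Y : atom E k X -> atom E k Y -> vcard X = vcard Y.
Proof. by move=> [fX minX] [fY minY]; apply/eqP; rewrite eqn_leq minX // minY. Qed.

Hypothesis hdeg : degenerate E.

Lemma vcard_nbrI_uncovered X Y : fragment E 2 X -> fragment E 2 Y ->
  nabla E (X `|` Y) !=set0 ->
  (vcard (nbr E X `&` nbr E Y) <= vcard (X `&` Y) + kappa E 2)%N.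
Proof.
move=> hX hY nXY; have [[fX [X2 _]] _] := hX; have [[fY _] _] := hY.
have fU : finite_set (X `|` Y) by rewrite finite_setU.
have adm1 : admissible E 1 (X `|` Y).
  split=> //; split; last exact: atleast1.
  by apply: leq_trans (vcard_le (@subsetUl _ X Y) fU); apply: leq_trans X2.
have kU := kappa_le_bnd (separable_mono (isT : (1 <= 2)%N) hdeg.1) adm1.
rewrite -hdeg.2 in kU.
have cU := vcard_nbr fU; rewrite nbrU in cU.
have uN := vcardUI (finite_nbr fX) (finite_nbr fY).
have uV := vcardUI fX fY.
have cX := vcard_nbr_fragment hX; have cY := vcard_nbr_fragment hY.
lia.
Qed.

Hypothesis hfaith : faithful E 2.

Lemma vcard_nbrI_covered X Y : atom E 2 X -> atom E 2 Y ->
  nbr E X `|` nbr E Y = [set: V] ->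
  (vcard (nbr E X `&` nbr E Y) <= kappa E 2)%N.
Proof.
move=> hX hY cover; have [[fX _] _] := hX.1; have [[fY _] _] := hY.1.
have [A [hA nA]] := hfaith.
have fT : finite_set [set: V].
  by rewrite -cover finite_setU; split; apply: finite_nbr.
have lA := atleast_vcard (sub_finite_set (@subsetT _ _) fT) nA.
have tA := vcard_setC (nbr E A) fT; have tY := vcard_setC (nbr E Y) fT.
have dXY := vcardDI (nbr E Y) (finite_nbr fX).
have nbrXD : nbr E X `\` nbr E Y = ~` nbr E Y.
  apply/seteqP; split=> x /=; first by case.
  by move=> nYx; split=> //; have : [set: V] x by []; rewrite -cover; case.
rewrite nbrXD in dXY.
have cA := vcard_nbr_fragment hA.1; have cX := vcard_nbr_fragment hX.1.
have cY := vcard_nbr_fragment hY.1.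
have eAY := atom_vcard_eq hA hY; have eXY := atom_vcard_eq hX hY.
rewrite /nabla in lA; lia.
Qed.

End Graph.

Theorem lemma5p2 (V : choiceType) (E : V -> V -> Prop)
  (hrefl : reflexiveG E) (hlf : locally_finite E)
  (hfaith : faithful E 2) (hdeg : degenerate E)
  (X Y : set V) (hX : atom E 2 X) (hY : atom E 2 Y) :
  (vcard (bnd E (X `&` Y)) + vcard (X `&` Y) <= vcard (nbr E X `&` nbr E Y))%N /\
  (vcard (nbr E X `&` nbr E Y) <= vcard (X `&` Y) + kappa E 2)%N /\
  (vcard (nabla E X `\` nabla E Y) + vcard (bnd E (X `&` Y))
     <= vcard (Y `\` X) + kappa E 2)%N.
Proof.
have [[fX _] _] := hX.1; have [[fY _] _] := hY.1.
have fI : finite_set (X `&` Y) by apply: finite_setIl.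
have lower : (vcard (bnd E (X `&` Y)) + vcard (X `&` Y)
              <= vcard (nbr E X `&` nbr E Y))%N.
  rewrite addnC -vcard_nbr //; apply: vcard_le; first exact: nbrI_sub.
  by apply: finite_setIl; exact: finite_nbr.
have upper : (vcard (nbr E X `&` nbr E Y) <= vcard (X `&` Y) + kappa E 2)%N.
  have [uncovered|covered] := pselect (nabla E (X `|` Y) !=set0).
    exact: (vcard_nbrI_uncovered hrefl hlf hdeg hX.1 hY.1 uncovered).
  have cover : nbr E X `|` nbr E Y = [set: V].
    rewrite -nbrU; apply/seteqP; split=> // v _; apply: contrapT => nv.
    by apply: covered; exists v.
  exact: leq_trans (vcard_nbrI_covered hrefl hlf hfaith hX hY cover) (leq_addl _ _).
split=> //; split=> //.
rewrite nablaD.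
have dYX := vcardDI (nbr E X) (finite_nbr hlf fY); rewrite setIC in dYX.
have dV := vcardDI X fY; rewrite setIC in dV.
have cX := vcard_nbr_fragment hrefl hlf hX.1; have cY := vcard_nbr_fragment hrefl hlf hY.1.
have eXY := atom_vcard_eq hX hY.
lia.
Qed.
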